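(* Assume $d(\eta,\cdot)$ attains its minimum over $\mathcal G$ at $g^*$. Then $\inf_{g\in\mathcal G^\circ_{ds}}d(\eta,g)=d(\eta,g^* )$, and for every OCDS prediction $g^{ds}\in\mathcal G^\circ_{ds}$, $$d(\eta,g^{ds})=d(\eta,g^* )+d(g^*,g^{ds}).$$ If in addition $b^*_j\in(0,1)$ for all $j\le p$ and $w^*_\ell\in(0,1)$ for all $\ell$, then with $g^{ds*}=g^{ds}(w^*,b^*_{1:p})$, $$d(g^*,g^{ds})=\big[d(\eta,g^{ds*})-d(\eta,g^* )\big]+\big[d(\eta,g^{ds})-d(\eta,g^{ds*})\big],$$ where the first bracket is nonnegative.
   Context: Standard setup. Let $n\ge1$, $k\ge2$, $p\ge1$ be integers and $m=p+k$. There are $n$ data points $x_1,\dots,x_n$ and $p$ rules $h^{(1)},\dots,h^{(p)}$, each a map from $\{x_1,\dots,x_n\}$ to $\{1,\dots,k\}\cup\{?\}$, where ''?'' means abstain. Let $n_j\ge1$ be the number of indices $i$ with $h^{(j)}(x_i)\neq ?$. $\Delta_k$ denotes the probability simplex in $\mathbb{R}^k$; an element $z\in\Delta_k^n\subset\mathbb{R}^{nk}$ is written $z=(z_1,\dots,z_n)$ with $z_i=(z_{i1},\dots,z_{ik})\in\Delta_k$. For $j\le p$ let $h^{(j)}\in\{0,1\}^{nk}$ also denote the vector with $h^{(j)}_{i\ell}=1$ iff $h^{(j)}(x_i)=\ell$; for $\ell\le k$ let $\vec e^{\,n}_\ell\in\{0,1\}^{nk}$ have entries $(\vec e^{\,n}_\ell)_{i\ell'}=\mathbf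 1(\ell'=\ell)$. The matrix $A\in\mathbb{R}^{m\times nk}$ has rows $a^{(j)}=h^{(j)}/n_j$ for $1\le j\le p$ and $a^{(p+\ell)}=\vec e^{\,n}_\ell/n$ for $1\le\ell\le k$. For $\theta\in\mathbb{R}^m$ put $a^{(\theta)}=A^\top\theta\in\mathbb{R}^{nk}$ (entries $a^{(\theta)}_{i\ell}$) and define $g^{(\theta)}\in\Delta_k^n$ by $g^{(\theta)}_{i\ell}=\exp(a^{(\theta)}_{i\ell})/\sum_{\ell'=1}^k\exp(a^{(\theta)}_{i\ell'})$; let $\mathcal G=\{g^{(\theta)}:\theta\in\mathbb{R}^m\}$. A fixed ''true labeling'' $\eta\in\Delta_k^n$ is given and $b^*:=A\eta\in\mathbb{R}^m$; write $b^*_j$ ($j\le p$) for the empirical rule accuracies and $w^*_\ell:=b^*_{p+\ell}$ ($\ell\le k$) for the empirical class frequencies. For $\mu,\nu\in\Delta_k^n$, $d(\mu,\nu)=\sum_{i=1}^n\mathrm{KL}(\mu_i\|\nu_i)=\sum_{i,\ell}\mu_{i\ell}\log(\mu_{i\ell}/\nu_{i\ell})$, with $0\log(0/x)=0$. One-coin Dawid–Skene (OCDS) prediction: for class frequencies $w\in\Delta_k$ and rule accuracies $b\in(0,1)^p$, $g^{ds}(w,b)\in\Delta_k^n$ is defined by $g^{ds}(w,b)_{i\ell}=\widehat g_{i\ell}/\sum_{\ell'}\widehat g_{i\ell'}$ where $\widehat g_{i\ell}=w_\ell\prod_{j:\,h^{(j)}(x_i)=\ell}b_j\prod_{j:\,h^{(j)}(x_i)\notin\{\ell,?\}}\frac{1-b_j}{k-1}$.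 $\mathcal G^\circ_{ds}=\{g^{ds}(w,b):\ w\in\Delta_k,\ 0<w_\ell<1\ \forall\ell,\ b\in(0,1)^p\}$. *)

From HB Require Import structures.
From mathcomp Require Import all_boot all_order all_algebra.
From mathcomp Require Import all_classical all_reals all_analysis.
Set Implicit Arguments. Unset Strict Implicit. Unset Printing Implicit Defensive.
Import Order.TTheory GRing.Theory Num.Theory.
Local Open Scope ring_scope.

Section Defs.
Variable R : realType.
Variables n k p : nat.
(* rules: h j i = Some l  iff  h^(j)(x_i) = l ; None = abstain "?" *)
Variable h : 'I_p -> 'I_n -> option 'I_k.

Definition nrule (j : 'I_p) : nat := #|[set i : 'I_n | h j i != None]|.

(* row r of the matrix A (r : 'I_(p+k), rows p+l are the class rows),
   entry (i,l) *)
Definition Arow (r : 'I_(p + k)) (i : 'I_n) (l : 'I_k) : R :=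
  match fintype.split r with
  | inl j => (h j i == Some l)%:R / (nrule j)%:R
  | inr l' => (l == l')%:R / n%:R
  end.

Definition atheta (th : 'I_(p + k) -> R) (i : 'I_n) (l : 'I_k) : R :=
  \sum_(r < p + k) th r * Arow r i l.

Definition gtheta (th : 'I_(p + k) -> R) (i : 'I_n) (l : 'I_k) : R :=
  expR (atheta th i l) / \sum_(l' < k) expR (atheta th i l').

Definition bstar (eta : 'I_n -> 'I_k -> R) (r : 'I_(p + k)) : R :=
  \sum_(i < n) \sum_(l < k) Arow r i l * eta i l.

Definition in_simplex (z : 'I_n -> 'I_k -> R) : Prop :=
  (forall i l, 0 <= z i l) /\ (forall i, \sum_(l < k) z i l = 1).

Definition klterm (x y : R) : R := if x == 0 then 0 else x * ln (x / y).

Definition dKL (mu nu : 'I_n -> 'I_k -> R) : R :=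
  \sum_(i < n) \sum_(l < k) klterm (mu i l) (nu i l).

Definition ghat (w : 'I_k -> R) (b : 'I_p -> R) (i : 'I_n) (l : 'I_k) : R :=
  w l * (\prod_(j < p | h j i == Some l) b j)
      * (\prod_(j < p | (h j i != Some l) && (h j i != None))
           ((1 - b j) / (k - 1)%:R)).

Definition gds (w : 'I_k -> R) (b : 'I_p -> R) (i : 'I_n) (l : 'I_k) : R :=
  ghat w b i l / \sum_(l' < k) ghat w b i l'.

Definition ds_param_ok (w : 'I_k -> R) (b : 'I_p -> R) : Prop :=
  [/\ (forall l, 0 < w l < 1), \sum_(l < k) w l = 1 & (forall j, 0 < b j < 1)].

End Defs.

From mathcomp Require Import all_boot all_order all_algebra.
From mathcomp Require Import all_classical all_reals all_analysis.
From mathcomp Require Import ring lra.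
Set Implicit Arguments. Unset Strict Implicit. Unset Printing Implicit Defensive.
Import Order.TTheory GRing.Theory Num.Theory.
Local Open Scope ring_scope.

(* For [mu] in the simplex, [dKL mu g^(th) = sum mu ln mu - <th, A mu> + sum_i ln Z_i(th)]
   with [Z_i] the softmax normaliser.  Perturbing a minimiser [ths] along
   [d = A g^(ths) - A eta] changes [dKL eta g^(.)] by [-t |d|^2 + O(t^2)], so the
   minimiser matches moments, [A g^(ths) = A eta].  With matching moments the
   identity above gives [dKL eta g^th = dKL eta g^(ths) + dKL g^(ths) g^th] for
   every [th].  Finally the OCDS predictions are exactly the [g^th]: rule rows of
   [th] are [n_j] times the log-odds of the accuracies and class rows are [n ln w];
   conversely any [th] is reached through a logistic map on rule rows and a softmax
   on class rows.  Hence the infimum over OCDS predictions is attained at [g^(ths)]. *)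

Section RealFacts.
Variable R : realType.
Implicit Types (x y t : R).

Lemma expR_le_quadratic x : `|x| <= 1/2 -> expR x <= 1 + x + 2 * x ^+ 2.
Proof.
rewrite ler_norml => /andP[xlo xhi].
have := expR_ge1Dx (- x); have := expRxMexpNx_1 x; have := expR_gt0 x.
set E := expR x; set F := expR (- x) => E0 EF F1.
(* [expR x = 1 / expR (- x) <= 1 / (1 - x)], and [1 / (1 - x) <= 1 + x + 2 x^2] *)
have : 0 <= (1 - x) * (1 + x + 2 * x ^+ 2) - 1 by nra.
nra.
Qed.

Lemma ln_sum_mul_expR_le (I : finType) (g u : I -> R) :
  (forall i, 0 <= g i) -> \sum_i g i = 1 -> (forall i, `|u i| <= 1/2) ->
  ln (\sum_i g i * expR (u i)) <= \sum_i g i * u i + 2 * \sum_i g i * u i ^+ 2.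
Proof.
move=> g0 g1 u_small.
have expR_ge : forall i, 1/2 <= expR (u i).
  move=> i; have := expR_ge1Dx (u i); move: (u_small i); rewrite ler_norml.
  lra.
have mean_gt0 : 0 < \sum_i g i * expR (u i).
  apply: (@lt_le_trans _ _ (\sum_i g i * (1/2))); first by rewrite -mulr_suml g1; lra.
  by apply: ler_sum => i _; apply: ler_wpM2l.
have ln_le : ln (\sum_i g i * expR (u i)) <= \sum_i g i * expR (u i) - 1.
  by have := @le_ln1Dx _ (\sum_i g i * expR (u i) - 1); rewrite addrCA subrr addr0; apply; lra.
apply: (le_trans ln_le).
rewrite lerBlDr -{2}g1 mulr_sumr -!big_split /=; apply: ler_sum => i _.
have := @expR_le_quadratic (u i) (u_small i); have := g0 i; nra.
Qed.

Lemma finite_family_small (I : finType) (f : I -> R) :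
  exists2 e, 0 < e & forall t i, 0 < t <= e -> `|t * f i| <= 1/2.
Proof.
set U := \big[Num.max/1]_i `|f i|.
have U1 : 1 <= U by exact: bigmax_ge_id.
exists (1 / (2 * U)); first by rewrite divr_gt0 // mulr_gt0 //; lra.
move=> t i /andP[t0 te]; rewrite normrM gtr0_norm //.
have fU : `|f i| <= U by exact: le_bigmax.
apply: (le_trans (ler_wpM2l (ltW t0) fU)).
by move: te; rewrite ler_pdivlMr ?mulr_gt0 //; lra.
Qed.

Lemma le0_of_le_linear (S c e : R) :
  0 < e -> (forall t, 0 < t <= e -> S <= c * t) -> S <= 0.
Proof.
move=> e0 lin; rewrite leNgt; apply/negP => S0.
have C0 : 0 < 2 * (`|c| + 1) by rewrite mulr_gt0 // ltr_wpDl.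
set t := Num.min e (S / (2 * (`|c| + 1))).
have t0 : 0 < t by rewrite lt_min e0 divr_gt0.
have tS : t * (2 * (`|c| + 1)) <= S by rewrite -ler_pdivlMr // ge_min lexx orbT.
have := lin t; rewrite t0 ge_min lexx /= => /(_ isT).
have : c * t <= `|c| * t.
  by apply: ler_wpM2r; [exact: ltW | exact: ler_norm].
nra.
Qed.

Lemma klterm_eq x y : 0 <= x -> 0 < y -> klterm x y = x * ln x - x * ln y.
Proof.
move=> x0 y0; rewrite /klterm; have [->|xn0] := eqVneq x 0; first by rewrite !mul0r subrr.
have xp : 0 < x by rewrite lt_neqAle eq_sym xn0.
by rewrite ln_div ?posrE // mulrBr.
Qed.

End RealFacts.

Lemma inf_eq_min (R : realType) (S : set R) x : S x -> lbound S x -> inf S = x.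
Proof.
move=> Sx Sx_lb; apply/le_anti/andP; split; last by apply: lb_le_inf => //; exists x.
by apply: ge_inf => //; exists x.
Qed.

Lemma sumr_gt0 {R : numDomainType} {I : finType} (i0 : I) {f : I -> R} :
  (forall i, 0 < f i) -> 0 < \sum_i f i.
Proof.
move=> f0; apply: (lt_le_trans (f0 i0)); rewrite (bigD1 i0) //= lerDl.
by apply: sumr_ge0 => i _; apply: ltW.
Qed.

Section ExponentialFamily.
Variable R : realType.
Variables n k p : nat.
Variable h : 'I_p -> 'I_n -> option 'I_k.
Implicit Types (th d : 'I_(p + k) -> R) (mu : 'I_n -> 'I_k -> R).

Definition log_partition th (i : 'I_n) : R := ln (\sum_l expR (atheta h th i l)).

Definition negentropy mu : R := \sum_i \sum_l mu i l * ln (mu i l).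

Lemma sum_expR_atheta_gt0 th i (l : 'I_k) : 0 < \sum_l expR (atheta h th i l).
Proof. exact: (sumr_gt0 l (fun l => expR_gt0 _)). Qed.

Lemma gtheta_gt0 th i l : 0 < gtheta h th i l.
Proof. by rewrite divr_gt0 ?expR_gt0 ?(sum_expR_atheta_gt0 _ _ l). Qed.

Lemma ln_gtheta th i l : ln (gtheta h th i l) = atheta h th i l - log_partition th i.
Proof. by rewrite ln_div ?posrE ?expR_gt0 ?expRK ?(sum_expR_atheta_gt0 _ _ l). Qed.

Lemma gtheta_shift th th' (c : 'I_n -> R) :
  (forall i l, atheta h th' i l = atheta h th i l + c i) -> gtheta h th' = gtheta h th.
Proof.
move=> shift; apply/funext => i; apply/funext => l; rewrite /gtheta.
under eq_bigr do rewrite shift expRD.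
by rewrite shift expRD -mulr_suml invfM mulrACA divff ?mulr1 // gt_eqF ?expR_gt0.
Qed.

Hypothesis k_gt0 : (0 < k)%N.

Lemma gtheta_sum1 th i : \sum_l gtheta h th i l = 1.
Proof.
by rewrite -mulr_suml divff // gt_eqF ?(sum_expR_atheta_gt0 _ _ (Ordinal k_gt0)).
Qed.

Lemma atheta_sub_scale th d t i l :
  atheta h (fun r => th r - t * d r) i l = atheta h th i l - t * atheta h d i l.
Proof. by rewrite /atheta mulr_sumr -sumrB; apply: eq_bigr => r _; ring. Qed.

Lemma sum_mul_atheta th mu :
  \sum_i \sum_l mu i l * atheta h th i l = \sum_r th r * bstar h mu r.
Proof.
transitivity (\sum_i \sum_l \sum_r th r * (Arow R h r i l * mu i l)).
  apply: eq_bigr => i _; apply: eq_bigr => l _; rewrite /atheta mulr_sumr.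
  by apply: eq_bigr => r _; ring.
under eq_bigr do rewrite exchange_big.
rewrite exchange_big; apply: eq_bigr => r _; rewrite /bstar mulr_sumr.
by apply: eq_bigr => i _; rewrite mulr_sumr.
Qed.

Lemma dKL_gtheta mu th : in_simplex mu ->
  dKL mu (gtheta h th) =
    negentropy mu - \sum_r th r * bstar h mu r + \sum_i log_partition th i.
Proof.
move=> [mu0 mu1]; rewrite -sum_mul_atheta /negentropy -sumrB -big_split.
apply: eq_bigr => i _ /=; rewrite -[log_partition _ _]mul1r -(mu1 i) mulr_suml.
rewrite -sumrB -big_split; apply: eq_bigr => l _ /=.
by rewrite klterm_eq ?gtheta_gt0 // ln_gtheta; ring.
Qed.

Lemma dKL_gtheta_self th : dKL (gtheta h th) (gtheta h th) = 0.
Proof.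
by apply: big1 => i _; apply: big1 => l _; rewrite klterm_eq ?subrr ?ltW ?gtheta_gt0.
Qed.

Lemma log_partition_sub_scale th d t i :
  log_partition (fun r => th r - t * d r) i =
  log_partition th i + ln (\sum_l gtheta h th i l * expR (- (t * atheta h d i l))).
Proof.
have Z0 := sum_expR_atheta_gt0 th i (Ordinal k_gt0).
rewrite -lnM ?posrE //; last first.
  by apply: (sumr_gt0 (Ordinal k_gt0)) => l; rewrite mulr_gt0 ?gtheta_gt0 ?expR_gt0.
congr ln; rewrite mulr_sumr; apply: eq_bigr => l _.
by rewrite atheta_sub_scale expRD /gtheta mulrA mulrCA divff ?mulr1 // gt_eqF.
Qed.

Lemma dKL_gtheta_sub_scale_le mu th d t :
  in_simplex mu -> (forall i l, `|t * atheta h d i l| <= 1/2) ->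
  dKL mu (gtheta h (fun r => th r - t * d r)) <=
    dKL mu (gtheta h th) + t * \sum_r d r * (bstar h mu r - bstar h (gtheta h th) r)
    + 2 * t ^+ 2 * \sum_i \sum_l gtheta h th i l * atheta h d i l ^+ 2.
Proof.
move=> mu_simplex small; rewrite !dKL_gtheta //.
have lp : \sum_i log_partition (fun r => th r - t * d r) i = \sum_i log_partition th i
    + \sum_i ln (\sum_l gtheta h th i l * expR (- (t * atheta h d i l))).
  by rewrite -big_split; apply: eq_bigr => i _; apply: log_partition_sub_scale.
have lin : \sum_r (th r - t * d r) * bstar h mu r =
    \sum_r th r * bstar h mu r - t * \sum_r d r * bstar h mu r.
  by rewrite mulr_sumr -sumrB; apply: eq_bigr => r _; ring.
have mismatch : \sum_r d r * (bstar h mu r - bstar h (gtheta h th) r) =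
    \sum_r d r * bstar h mu r - \sum_i \sum_l gtheta h th i l * atheta h d i l.
  by rewrite sum_mul_atheta -sumrB; apply: eq_bigr => r _; ring.
have lse_le : \sum_i ln (\sum_l gtheta h th i l * expR (- (t * atheta h d i l))) <=
    - t * \sum_i \sum_l gtheta h th i l * atheta h d i l
    + 2 * t ^+ 2 * \sum_i \sum_l gtheta h th i l * atheta h d i l ^+ 2.
  rewrite !mulr_sumr -big_split /=; apply: ler_sum => i _.
  apply: le_trans (ln_sum_mul_expR_le _ _ _) _.
  - by move=> l; apply/ltW/gtheta_gt0.
  - exact: gtheta_sum1.
  - by move=> l; rewrite normrN.
  rewrite !mulr_sumr -!big_split /=; apply: ler_sum => l _.
  by rewrite sqrrN exprMn; lra.
rewrite lp lin mismatch; lra.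
Qed.

Lemma gtheta_in_simplex th : in_simplex (gtheta h th).
Proof. by split=> [i l|i]; [apply/ltW/gtheta_gt0 | exact: gtheta_sum1]. Qed.

Lemma moment_matching eta ths : in_simplex eta ->
  (forall th, dKL eta (gtheta h ths) <= dKL eta (gtheta h th)) ->
  forall r, bstar h (gtheta h ths) r = bstar h eta r.
Proof.
move=> eta_simplex ths_min.
set d := fun r => bstar h (gtheta h ths) r - bstar h eta r.
set M := \sum_i \sum_l gtheta h ths i l * atheta h d i l ^+ 2.
have [e e0 small] := finite_family_small (fun il : 'I_n * 'I_k => atheta h d il.1 il.2).
have mismatch : \sum_r d r * (bstar h eta r - bstar h (gtheta h ths) r) = - \sum_r d r ^+ 2.
  by rewrite -sumrN; apply: eq_bigr => r _; rewrite /d; ring.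
have quadratic : forall t, 0 < t <= e -> \sum_r d r ^+ 2 <= (2 * M) * t.
  move=> t te; have t0 : 0 < t by case/andP: te.
  have := dKL_gtheta_sub_scale_le ths eta_simplex (fun i l => small t (i, l) te).
  rewrite mismatch => /(le_trans (ths_min _)).
  rewrite -/M; set S := \sum_r d r ^+ 2; nra.
have S0 : \sum_r d r ^+ 2 = 0.
  by apply/le_anti; rewrite (le0_of_le_linear e0 quadratic) sumr_ge0 // => r _; apply: sqr_ge0.
move=> r; apply/eqP; rewrite -subr_eq0 -sqrf_eq0; apply/eqP.
by move/psumr_eq0P: S0; apply=> // r' _; apply: sqr_ge0.
Qed.

Lemma dKL_pythagoras eta ths th : in_simplex eta ->
  (forall r, bstar h (gtheta h ths) r = bstar h eta r) ->
  dKL eta (gtheta h th) = dKL eta (gtheta h ths) + dKL (gtheta h ths) (gtheta h th).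
Proof.
move=> eta_simplex moments; have gs_simplex := gtheta_in_simplex ths.
have := dKL_gtheta_self ths; rewrite !dKL_gtheta //.
have same : forall th', \sum_r th' r * bstar h (gtheta h ths) r = \sum_r th' r * bstar h eta r.
  by move=> th'; apply: eq_bigr => r _; rewrite moments.
rewrite !same; lra.
Qed.

End ExponentialFamily.

Lemma exists_neq_ord k (l : 'I_k) : (1 < k)%N -> exists l' : 'I_k, l' != l.
Proof.
move=> k_gt1; have k_gt0 := ltnW k_gt1.
have [->|l_neq0] := eqVneq l (Ordinal k_gt0); last by exists (Ordinal k_gt0); rewrite eq_sym.
by exists (Ordinal k_gt1).
Qed.

Section OneCoinDawidSkene.
Variable R : realType.
Variables n k p : nat.
Variable h : 'I_p -> 'I_n -> option 'I_k.
Implicit Types (th : 'I_(p + k) -> R) (w : 'I_k -> R) (b : 'I_p -> R).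

Lemma atheta_split th i l :
  atheta h th i l = \sum_(j < p) th (lshift k j) * ((h j i == Some l)%:R / (nrule h j)%:R)
                    + th (rshift p l) / n%:R.
Proof.
rewrite /atheta big_split_ord /=; congr (_ + _).
  by apply: eq_bigr => j _; rewrite /Arow (unsplitK (inl j)).
rewrite (bigD1 l) //= big1 ?addr0; first by rewrite /Arow (unsplitK (inr l)) eqxx mul1r.
by move=> l' l'l; rewrite /Arow (unsplitK (inr l')) eq_sym (negbTE l'l) mul0r mulr0.
Qed.

(* The natural parameter of a rule of accuracy [x]: in [ghat] a vote for [l]
   weighs [x] against [(1 - x) / (k - 1)] for every other class. *)
Definition ds_logodds (x : R) : R := ln (x * (k - 1)%:R / (1 - x)).

Definition ds_accuracy (y : R) : R := expR y / ((k - 1)%:R + expR y).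

Definition ds_theta w b (r : 'I_(p + k)) : R :=
  match fintype.split r with
  | inl j => (nrule h j)%:R * ds_logodds (b j)
  | inr l => n%:R * ln (w l)
  end.

Hypothesis n_gt0 : (0 < n)%N.
Hypothesis nrule_gt0 : forall j, (0 < nrule h j)%N.
Hypothesis k_gt1 : (1 < k)%N.

Let km1_gt0 : 0 < (k - 1)%:R :> R. Proof. by rewrite ltr0n subn_gt0. Qed.

Lemma ds_accuracy_in01 y : 0 < ds_accuracy y < 1.
Proof.
rewrite divr_gt0 ?addr_gt0 ?expR_gt0 //= ltr_pdivrMr ?addr_gt0 ?expR_gt0 //.
by rewrite mul1r ltrDr.
Qed.

Lemma ds_accuracyK : cancel ds_accuracy ds_logodds.
Proof.
move=> y; rewrite /ds_logodds /ds_accuracy.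
have D0 : (k - 1)%:R + expR y != 0 by rewrite gt_eqF ?addr_gt0 ?expR_gt0.
have -> : 1 - expR y / ((k - 1)%:R + expR y) = (k - 1)%:R / ((k - 1)%:R + expR y).
  by apply: (mulIf D0); rewrite mulrBl !divfK // mul1r addrK.
have C0 : (k - 1)%:R != 0 :> R by rewrite gt_eqF.
rewrite -[RHS]expRK; congr ln; field.
by rewrite D0 C0.
Qed.

Lemma atheta_ds_theta w b i l :
  atheta h (ds_theta w b) i l = \sum_(j < p | h j i == Some l) ds_logodds (b j) + ln (w l).
Proof.
rewrite atheta_split; congr (_ + _).
  rewrite [RHS]big_mkcond; apply: eq_bigr => j _; rewrite /ds_theta (unsplitK (inl j)).
  case: (h j i == Some l); last by rewrite mul0r mulr0.
  by rewrite mul1r mulrAC divff ?mul1r // pnatr_eq0 -lt0n.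
by rewrite /ds_theta (unsplitK (inr l)) mulrAC divff ?mul1r // pnatr_eq0 -lt0n.
Qed.

Lemma expR_ds_logodds x : 0 < x < 1 -> expR (ds_logodds x) = x * (k - 1)%:R / (1 - x).
Proof. by case/andP=> x0 x1; rewrite lnK // posrE divr_gt0 ?mulr_gt0 // subr_gt0. Qed.

Lemma ghat_expR_atheta w b i l : ds_param_ok w b ->
  ghat h w b i l = expR (atheta h (ds_theta w b) i l) *
     \prod_(j < p | h j i != None) ((1 - b j) / (k - 1)%:R).
Proof.
move=> [w01 _ b01]; have w0 : 0 < w l by case/andP: (w01 l).
rewrite atheta_ds_theta expRD expR_sum lnK ?posrE //.
rewrite [X in _ = _ * X](bigID (fun j => h j i == Some l)) /=.
have -> : \prod_(j < p | (h j i != None) && (h j i == Some l)) ((1 - b j) / (k - 1)%:R) =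
          \prod_(j < p | h j i == Some l) ((1 - b j) / (k - 1)%:R).
  by apply: eq_bigl => j; case: eqP => // ->.
have -> : \prod_(j < p | (h j i != None) && ~~ (h j i == Some l)) ((1 - b j) / (k - 1)%:R) =
          \prod_(j < p | (h j i != Some l) && (h j i != None)) ((1 - b j) / (k - 1)%:R).
  by apply: eq_bigl => j; rewrite andbC.
rewrite /ghat [w l * _]mulrC !mulrA; congr (_ * _).
rewrite mulrAC -big_split /=; congr (_ * _); apply: eq_bigr => j _.
have /andP[b0 b1] := b01 j.
rewrite expR_ds_logodds ?b01 //; field.
by rewrite !gt_eqF // subr_gt0.
Qed.

Lemma gds_gtheta w b : ds_param_ok w b -> gds h w b = gtheta h (ds_theta w b).
Proof.
move=> wb_ok; have [_ _ b01] := wb_ok; apply/funext => i; apply/funext => l.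
have K0 : 0 < \prod_(j < p | h j i != None) ((1 - b j) / (k - 1)%:R).
  by apply: prodr_gt0 => j _; case/andP: (b01 j) => _ b1; rewrite divr_gt0 // subr_gt0.
rewrite /gds /gtheta; under eq_bigr do rewrite ghat_expR_atheta //.
by rewrite ghat_expR_atheta // -mulr_suml invfM mulrACA divff ?mulr1 // gt_eqF.
Qed.

Lemma gtheta_in_ds th : exists w b, ds_param_ok w b /\ gtheta h th = gds h w b.
Proof.
have k_gt0 := ltnW k_gt1.
pose E l := expR (th (rshift p l) / n%:R); pose W := \sum_l E l.
have W0 : 0 < W by apply: (sumr_gt0 (Ordinal k_gt0)) => l; apply: expR_gt0.
pose w l := E l / W; pose b j := ds_accuracy (th (lshift k j) / (nrule h j)%:R).
have wb_ok : ds_param_ok w b.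
  split=> [l||j]; last exact: ds_accuracy_in01.
  - rewrite divr_gt0 ?expR_gt0 //= ltr_pdivrMr // mul1r /W (bigD1 l) //= ltrDl.
    have [l' l'l] := exists_neq_ord l k_gt1.
    rewrite (bigD1 l') //= ltr_pwDl ?expR_gt0 //.
    by apply: sumr_ge0 => *; apply/ltW/expR_gt0.
  - by rewrite -mulr_suml divff // gt_eqF.
exists w, b; split => //; rewrite gds_gtheta //; symmetry.
apply: (gtheta_shift (c := fun=> - ln W)) => i l.
rewrite atheta_ds_theta atheta_split -addrA ln_div ?posrE ?expR_gt0 // expRK.
congr (_ + _); rewrite [LHS]big_mkcond; apply: eq_bigr => j _ /=.
by case: (h j i == Some l); rewrite ?mul0r ?mulr0 // ds_accuracyK mul1r.
Qed.

Lemma sum_bstar_class (eta : 'I_n -> 'I_k -> R) :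
  in_simplex eta -> \sum_l bstar h eta (rshift p l) = 1.
Proof.
move=> [_ eta1]; rewrite /bstar exchange_big /=.
transitivity (\sum_(i < n) (\sum_l eta i l) / n%:R); last first.
  under eq_bigr do rewrite eta1.
  by rewrite sumr_const card_ord -[_ *+ n]mulr_natr mul1r mulVf // pnatr_eq0 -lt0n.
apply: eq_bigr => i _; rewrite exchange_big /= mulr_suml; apply: eq_bigr => l _.
rewrite (bigD1 l) //= big1 ?addr0; first by rewrite /Arow (unsplitK (inr l)) eqxx mul1r mulrC.
by move=> l' l'l; rewrite /Arow (unsplitK (inr l')) eq_sym (negbTE l'l) mul0r mul0r.
Qed.

End OneCoinDawidSkene.

Local Open Scope classical_set_scope.

Theorem lemma6 (R : realType) (n k p : nat)
  (h : 'I_p -> 'I_n -> option 'I_k) (eta : 'I_n -> 'I_k -> R)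
  (thstar : 'I_(p + k) -> R) :
  (1 <= n)%N -> (2 <= k)%N -> (1 <= p)%N ->
  (forall j, (1 <= nrule h j)%N) ->
  in_simplex eta ->
  (* d(eta, .) attains its minimum over G at g* = g^(thstar) *)
  (forall th : 'I_(p + k) -> R,
      dKL eta (gtheta h thstar) <= dKL eta (gtheta h th)) ->
  let gs := gtheta h thstar in
  [/\ inf [set x | exists w b, ds_param_ok w b /\ x = dKL eta (gds h w b)]
        = dKL eta gs,
      (forall w b, ds_param_ok w b ->
         dKL eta (gds h w b) = dKL eta gs + dKL gs (gds h w b))
    & ((forall j : 'I_p, 0 < bstar h eta (lshift k j) < 1) ->
       (forall l : 'I_k, 0 < bstar h eta (rshift p l) < 1) ->
       let gdss := gds h (fun l => bstar h eta (rshift p l))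
                         (fun j => bstar h eta (lshift k j)) in
       0 <= dKL eta gdss - dKL eta gs /\
       (forall w b, ds_param_ok w b ->
          dKL gs (gds h w b) =
            (dKL eta gdss - dKL eta gs) + (dKL eta (gds h w b) - dKL eta gdss)))].
Proof.
move=> n_gt0 k_gt1 _ nrule_gt0 eta_simplex ths_min gs.
have k_gt0 : (0 < k)%N := ltnW k_gt1.
have moments := moment_matching k_gt0 eta_simplex ths_min.
have gs_le_ds : forall w b, ds_param_ok w b -> dKL eta gs <= dKL eta (gds h w b).
  by move=> w b wb; rewrite gds_gtheta //; apply: ths_min.
have pythagoras : forall w b, ds_param_ok w b ->
    dKL eta (gds h w b) = dKL eta gs + dKL gs (gds h w b).
  by move=> w b wb; rewrite gds_gtheta // (dKL_pythagoras k_gt0 _ eta_simplex moments).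
split => //.
- have [w [b [wb gs_ds]]] := gtheta_in_ds n_gt0 nrule_gt0 k_gt1 thstar.
  apply: inf_eq_min; first by exists w, b; rewrite /gs gs_ds.
  by move=> _ [w' [b' [wb' ->]]]; apply: gs_le_ds.
- move=> b01 w01 gdss.
  have gdss_ok : ds_param_ok (fun l => bstar h eta (rshift p l)) (fun j => bstar h eta (lshift k j)).
    by split => //; apply: sum_bstar_class.
  split=> [|w b wb]; first by rewrite subr_ge0; apply: gs_le_ds.
  by rewrite pythagoras //; ring.
Qed.
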